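(* Let $G=(V,E)$ be a finite, undirected, unweighted, 2-vertex-connected graph with $n=|V|$ vertices. If $G$ contains a Hamiltonian path, then $G$ has a TSP tour of length at most $4n/3$.
   Context: A Hamiltonian path is a path in $G$ visiting every vertex exactly once. A TSP tour of $G$ is a closed walk in $G$ that visits every vertex at least once; its length is the number of edges traversed, counted with multiplicity. *)

(* A finite simple graph is a symmetric irreflexive
   relation e on a finType T (vertex set V = T, n = #|T|). *)
From mathcomp Require Import all_boot.
Set Implicit Arguments. Unset Strict Implicit. Unset Printing Implicit Defensive.

Section Graph.
Variables (T : finType) (e : rel T).

Definition simple_graph : Prop := symmetric e /\ irreflexive e.

Definition connected_graph : Prop := forall x y : T, connect e x y.

Definition del_vertex (v : T) : rel T := fun a b => [&& e a b, a != v & b != v].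

Definition two_vertex_connected : Prop :=
  2 < #|T| /\ connected_graph /\
  forall v x y : T, x != v -> y != v -> connect (del_vertex v) x y.

Definition hamiltonian_path (s : seq T) : Prop :=
  [/\ sorted e s, uniq s & forall v : T, v \in s].

(* TSP tour: closed walk x :: p (consecutive vertices adjacent, ending at x)
   visiting every vertex at least once; its length is size p, the number
   of traversed edges counted with multiplicity. *)
Definition tsp_tour (x : T) (p : seq T) : Prop :=
  [/\ path e x p, last x p = x & forall v : T, v \in x :: p].

Definition tour_length (x : T) (p : seq T) : nat := size p.

End Graph.

(* Number the vertices 0, ..., N along the Hamiltonian path.  Removing an inner vertex b
   leaves the graph connected, so some edge (a chord) jumps over b.  Taking every time the
   chord that reaches farthest yields chords (a_1, b_1), ..., (a_m, b_m) with a_1 = 0,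
   b_m = N, consecutive chords crossing and b_k <= a_(k+2).  Going up the path with the odd
   chords as shortcuts and coming back down the path is a tour; so is the same with the
   even chords.  A third tour goes up with the odd chords and comes back with the even
   ones, making a detour into each overlap (a_(k+1), b_k) of consecutive chords.  The
   three lengths add up to 4N + 2 = 4n - 2, so the shortest has length at most 4n/3. *)

From mathcomp Require Import all_boot zify.
Set Implicit Arguments. Unset Strict Implicit. Unset Printing Implicit Defensive.

Definition up (x y : nat) : seq nat := iota x.+1 (y - x).

Definition back {T : Type} (x : T) (w : seq T) : seq T := rev (belast x w).

Definition detour (b a : nat) : seq nat := back a.+1 (up a.+1 b) ++ up a.+1 b.

Lemma size_up x y : size (up x y) = y - x.
Proof. exact: size_iota. Qed.

Lemma last_up x y : x <= y -> last x (up x y) = y.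
Proof.
rewrite /up => /subnKC; move: (y - x) => k <-.
by elim: k x => [|k IH] x /=; rewrite ?addn0 // IH addSnnS.
Qed.

Lemma mem_up x y i : x <= y -> (i \in x :: up x y) = (x <= i <= y).
Proof. by move=> le_xy; rewrite -[_ :: _]/(iota x (y - x).+1) mem_iota; lia. Qed.

Lemma size_back (T : Type) (x : T) w : size (back x w) = size w.
Proof. by rewrite size_rev size_belast. Qed.

Lemma last_back (T : Type) (x : T) w : last (last x w) (back x w) = x.
Proof. by case: w => //= y w; rewrite /back /= rev_cons last_rcons. Qed.

Lemma mem_back (T : eqType) (x : T) w i : (i \in last x w :: back x w) = (i \in x :: w).
Proof. by rewrite [x :: w]lastI mem_rcons !inE mem_rev. Qed.

Lemma mem_detour b a i : a < i < b -> i \in detour b a.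
Proof.
move=> /andP[lt_ai lt_ib]; rewrite mem_cat; apply/orP; left.
have le_ab : a.+1 <= b by lia.
have : i \in last a.+1 (up a.+1 b) :: back a.+1 (up a.+1 b).
  by rewrite mem_back mem_up //; lia.
by rewrite last_up // inE ltn_eqF.
Qed.

Lemma behead_ind (T : Type) (P : seq T -> Prop) :
  P [::] -> (forall x s, P (behead s) -> P (x :: s)) -> forall s, P s.
Proof.
move=> P0 PS s; suff [] : P s /\ P (behead s) by [].
by elim: s => [|x s [IHs IHbs]]; split => //; apply: PS.
Qed.

Section IndexWalks.

Variables (N : nat) (A : rel nat).
Hypothesis A_sym : symmetric A.
Hypothesis A_succ : forall i, i < N -> A i i.+1.

Lemma up_path x y : y <= N -> path A x (up x y).
Proof.
rewrite /up => le_yN; have [/ltnW/eqnP-> //|le_xy] := ltnP y x.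
have : x + (y - x) <= N by lia.
move: (y - x) => k; elim: k x {le_xy} => [|k IH] x //= le_xkN.
by rewrite A_succ ?IH; lia.
Qed.

Lemma path_back x w : path A x w -> path A (last x w) (back x w).
Proof. by rewrite rev_path (@eq_path _ _ A) // => y z; apply: A_sym. Qed.

Lemma detour_path b a : a <= b <= N -> path A b (detour b a) /\ last b (detour b a) = b.
Proof.
case/andP; rewrite leq_eqVlt => /orP[/eqP<- _ | lt_ab le_bN].
  by rewrite /detour /up (eqnP (leqnSn a)).
have last_w := last_up lt_ab.
have := path_back (up_path a.+1 le_bN); have := last_back a.+1 (up a.+1 b).
by rewrite /detour cat_path last_cat last_w => -> ->; rewrite up_path.
Qed.

(* A chain [:: (a_1, b_1); ...] lists chords in order; [lead_low] is the low end of its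
   first chord, N for the empty chain, so that the detour at the last chord is empty. *)
Definition lead_low (c : seq (nat * nat)) : nat := if c is (a, _) :: _ then a else N.

Fixpoint chord_chain (c : seq (nat * nat)) : Prop :=
  match c with
  | [::] => True
  | (a, b) :: c' =>
    [/\ A a b, a < b, b <= lead_low (behead c'),
        (if c' is (a', b') :: _ then [&& a < a', a' < b & b < b'] else b = N)
      & chord_chain c']
  end.

(* The walk from x to N through the chords of odd rank in c, with the detours into the
   overlaps when d is set. *)
Fixpoint chord_walk (d : bool) (x : nat) (c : seq (nat * nat)) : seq nat :=
  match c with
  | [::] => up x N
  | (a, b) :: c' =>
    up x a ++ b :: (if d then detour b (lead_low c') else [::]) ++
    (if c' is _ :: c'' then chord_walk d b c'' else up b N)
  end.

Lemma chord_walk_cons d x a b c :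
  chord_walk d x ((a, b) :: c) =
  up x a ++ b :: (if d then detour b (lead_low c) else [::]) ++ chord_walk d b (behead c).
Proof. by case: c. Qed.

Lemma chord_chain_behead c : chord_chain c -> chord_chain (behead c).
Proof. by case: c => [|[a b] c] // []. Qed.

Lemma chain_lead_low_le c : chord_chain c -> lead_low c <= N.
Proof.
elim: c => [|[a b] c IH] //= [_ lt_ab _ cross /IH].
by case: c cross {IH} => [|[a' b'] c] /= => [eq_bN | /and3P[lt_aa' _ _]]; lia.
Qed.

Lemma chain_next_low_le a b c : chord_chain ((a, b) :: c) -> lead_low c <= b.
Proof. by case: c => [|[a' b'] c] [_ _ _] /= => [-> | /and3P[_ /ltnW]]. Qed.

Lemma chain_high_le a b c : chord_chain ((a, b) :: c) -> b <= N.
Proof. by case=> _ _ le_b _ /chord_chain_behead/chain_lead_low_le; apply: leq_trans. Qed.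

Lemma chord_walk_path d x c : chord_chain c -> x <= lead_low c ->
  path A x (chord_walk d x c) /\ last x (chord_walk d x c) = N.
Proof.
elim/behead_ind: c x => [|[a b] c IH] x chain le_xa.
  by rewrite up_path // last_up.
have le_bN := chain_high_le chain; have le_lb := chain_next_low_le chain.
case: chain => ab lt_ab le_b _ /chord_chain_behead /IH /(_ le_b) [Wpath Wlast].
rewrite chord_walk_cons; set D := if d then _ else _.
have [Dpath Dlast] : path A b D /\ last b D = b.
  by rewrite /D; case: ifP => // _; apply: detour_path; rewrite le_lb.
rewrite cat_path last_cat last_up //= up_path; last lia.
by rewrite ab cat_path last_cat Dpath Dlast.
Qed.

Lemma size_chord_walks x y c : chord_chain c -> c != [::] ->
  x <= lead_low c -> y <= lead_low (behead c) ->
  size (chord_walk false x c) + size (chord_walk true x c) +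
  size (chord_walk false y (behead c)) + size (chord_walk true y (behead c)) =
  2 * (lead_low c - x) + 2 * (N - y) + 2.
Proof.
elim: c x y => [|[a b] c IH] x y chain // _ le_xa le_yl.
rewrite /= in le_xa le_yl.
have le_bN := chain_high_le chain; have le_lb := chain_next_low_le chain.
rewrite !(chord_walk_cons _ x) !size_cat /= !size_cat size_back !size_up.
case: c IH chain le_lb le_yl => [|[a' b'] c] IH chain le_lb le_yl.
  by case: chain => _ _ _ /= eq_bN _; rewrite !size_up; lia.
case: (chain) => _ _ le_b /and3P[_ lt_a'b _] /IH -/(_ y b isT le_yl le_b).
have lt_lb : lead_low ((a', b') :: c) < b by [].
lia.
Qed.

Lemma chord_walks_cover x y c i : chord_chain c ->
  x <= lead_low c -> y <= lead_low (behead c) -> x <= i <= N -> (i <= lead_low c) || (y <= i) ->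
  (i \in x :: chord_walk true x c) || (i \in y :: chord_walk true y (behead c)).
Proof.
elim: c x y => [|[a b] c IH] x y chain le_xl le_yl /andP[le_xi le_iN] cover.
  by rewrite /= (mem_up _ le_xl) le_xi le_iN.
have le_bN := chain_high_le chain; rewrite /= in le_xl le_yl cover.
case: chain => _ _ le_b _ /IH/(_ le_yl le_b) {}IH.
rewrite chord_walk_cons -cat_cons mem_cat (mem_up _ le_xl).
case/orP: cover => [le_ia | le_yi]; first by rewrite le_xi le_ia.
have [/andP[lt_li lt_ib] | not_over] := boolP (lead_low c < i < b).
  by rewrite inE mem_cat mem_detour ?lt_li ?lt_ib ?orbT.
have outside : (i <= lead_low c) || (b <= i) by move: not_over; rewrite negb_and -!leqNgt.
have /IH/(_ outside) : y <= i <= N by rewrite le_yi le_iN.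
case/orP => [-> | ]; first by rewrite orbT.
by rewrite !inE mem_cat => /orP[-> | ->]; rewrite ?orbT.
Qed.

Definition index_tour (P : seq nat) : Prop :=
  [/\ path A 0 P, last 0 P = 0 & forall i, i <= N -> i \in 0 :: P].

Lemma round_trip_index_tour w1 w2 :
  path A 0 w1 -> last 0 w1 = N -> path A 0 w2 -> last 0 w2 = N ->
  (forall i, i <= N -> (i \in 0 :: w1) || (i \in 0 :: w2)) ->
  index_tour (w1 ++ back 0 w2).
Proof.
move=> path1 last1 path2 last2 cover; split.
- by rewrite cat_path path1 last1 -last2 path_back.
- by rewrite last_cat last1 -last2 last_back.
move=> i /cover; rewrite -cat_cons mem_cat -(mem_back 0 w2) last2 inE.
by case/orP=> [-> // | /orP[/eqP-> | ->]]; rewrite ?orbT // -last1 mem_last.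
Qed.

Lemma chain_index_tour b c : chord_chain ((0, b) :: c) ->
  exists P, index_tour P /\ 3 * size P <= 4 * N.+1.
Proof.
move=> chain; have chain_c := chord_chain_behead chain; set c0 := (0, b) :: c in chain.
have [path_f0 last_f0] := chord_walk_path false chain (leq0n _).
have [path_t0 last_t0] := chord_walk_path true chain (leq0n _).
have [path_f last_f] := chord_walk_path false chain_c (leq0n _).
have [path_t last_t] := chord_walk_path true chain_c (leq0n _).
have [path_up last_up0] := (up_path 0 (leqnn N), last_up (leq0n N)).
have cover_up i : i <= N -> i \in 0 :: up 0 N by rewrite mem_up.
pose T1 := chord_walk false 0 c0 ++ back 0 (up 0 N).
pose T2 := chord_walk false 0 c ++ back 0 (up 0 N).
pose T3 := chord_walk true 0 c0 ++ back 0 (chord_walk true 0 c).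
have tour1 : index_tour T1.
  by apply: round_trip_index_tour => // i /cover_up ->; rewrite orbT.
have tour2 : index_tour T2.
  by apply: round_trip_index_tour => // i /cover_up ->; rewrite orbT.
have tour3 : index_tour T3.
  by apply: round_trip_index_tour => // i le_iN; apply: chord_walks_cover; rewrite ?le_iN ?orbT.
have size1 : size T1 = size (chord_walk false 0 c0) + N.
  by rewrite /T1 size_cat size_back size_up subn0.
have size2 : size T2 = size (chord_walk false 0 c) + N.
  by rewrite /T2 size_cat size_back size_up subn0.
have size3 : size T3 = size (chord_walk true 0 c0) + size (chord_walk true 0 c).
  by rewrite /T3 size_cat size_back.
have sizes : size (chord_walk false 0 c0) + size (chord_walk true 0 c0) +
    size (chord_walk false 0 c) + size (chord_walk true 0 c) = 2 * N + 2.
  by rewrite (size_chord_walks chain) ?subn0.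
have [small1 | big1] := leqP (3 * size T1) (4 * N.+1); first by exists T1.
have [small2 | big2] := leqP (3 * size T2) (4 * N.+1); first by exists T2.
by exists T3; split => //; lia.
Qed.

Definition farthest_chord (b a v : nat) : Prop :=
  [/\ a < b, b < v, v <= N, A a v &
      forall u w, u < b -> b < w -> w <= N -> A u w -> w <= v].

Lemma exists_farthest_chord b :
  (exists a v, [/\ a < b, b < v, v <= N & A a v]) -> exists a v, farthest_chord b a v.
Proof.
move=> [a0 [v0 [lt_a0b lt_bv0 le_v0N Aa0v0]]].
pose crossing v := [&& b < v, v <= N & has (A^~ v) (iota 0 b)].
have cross_v0 : exists v, crossing v.
  exists v0; rewrite /crossing lt_bv0 le_v0N; apply/hasP; exists a0 => //.
  by rewrite mem_iota.
have crossing_le v : crossing v -> v <= N by case/and3P.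
case: (ex_maxnP cross_v0 crossing_le) => v /and3P[lt_bv le_vN /hasP[a]].
rewrite mem_iota => /andP[_ lt_ab] Aav farthest; exists a, v.
split => // u w lt_ub lt_bw le_wN Auw.
by apply: farthest; rewrite /crossing lt_bw le_wN; apply/hasP; exists u; rewrite ?mem_iota.
Qed.

Lemma extend_chain (farthest : forall b, 0 < b < N -> exists a v, farthest_chord b a v)
  pb a b : 0 < pb -> farthest_chord pb a b ->
  exists c, chord_chain ((a, b) :: c) /\ pb <= lead_low c.
Proof.
have [k] := ubnP (N - b); elim: k pb a b => // k IH pb a b lt_bk pb_gt0.
case=> lt_apb lt_pbb le_bN Aab farthest_pb.
have [eq_bN | ne_bN] := eqVneq b N; first by exists [::]; do !split => //=; lia.
have [a' [v fb]] : exists a' v, farthest_chord b a' v by apply: farthest; lia.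
case: (fb) => lt_a'b lt_bv le_vN Aa'v _; have lt_vk : N - v < k by lia.
have [c [chain le_bl]] := IH b a' v lt_vk (leq_ltn_trans (leq0n pb) lt_pbb) fb.
(* A chord from below pb would jump over pb and beyond b, against the choice of b. *)
have le_pba' : pb <= a'.
  by rewrite leqNgt; apply/negP => lt_a'pb; have := farthest_pb a' v lt_a'pb _ le_vN Aa'v; lia.
exists ((a', v) :: c); split => //; split => //=; first lia.
by rewrite lt_a'b lt_bv andbT; lia.
Qed.

Lemma short_index_tour : 1 < N ->
  (forall b, 0 < b < N -> exists a v, [/\ a < b, b < v, v <= N & A a v]) ->
  exists P, index_tour P /\ 3 * size P <= 4 * N.+1.
Proof.
move=> N_gt1 crossing.
have farthest b : 0 < b < N -> exists a v, farthest_chord b a v.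
  by move=> /crossing; apply: exists_farthest_chord.
have [a [b f1]] := farthest 1 N_gt1.
have [c [chain _]] := extend_chain farthest (ltn0Sn 0) f1.
have a_eq0 : a = 0 by case: f1; case: (a).
by move: chain; rewrite a_eq0; apply: chain_index_tour.
Qed.

End IndexWalks.

Lemma path_jumps_over (T : Type) (r : rel T) (h : T -> nat) b x q :
  path r x q -> h x < b -> b < h (last x q) -> (forall y z, r y z -> h z != b) ->
  exists y z, [/\ r y z, h y < b & b < h z].
Proof.
elim: q x => [|z q IH] x /=; first by move=> _ lt_xb /(ltn_trans lt_xb); rewrite ltnn.
move=> /andP[r_xz path_zq] lt_xb lt_bl not_b.
have [lt_zb | le_bz] := ltnP (h z) b; first exact: IH path_zq lt_zb lt_bl not_b.
by exists x, z; split => //; rewrite ltn_neqAle eq_sym (not_b x z r_xz).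
Qed.

Lemma card_hamiltonian (T : finType) (e : rel T) s : hamiltonian_path e s -> #|T| = size s.
Proof. by case=> _ /card_uniqP <- all_s; apply: eq_card => v; rewrite all_s. Qed.

Section HamiltonianIndexing.

Variables (T : finType) (e : rel T) (x0 : T) (p : seq T).
Hypotheses (e_sym : symmetric e) (ham : hamiltonian_path e (x0 :: p)).

Local Notation vertex := (nth x0 (x0 :: p)).
Local Notation A := (relpre vertex e).

Lemma index_rel_sym : symmetric A.
Proof. by move=> i j; rewrite /= e_sym. Qed.

Lemma index_rel_succ i : i < size p -> A i i.+1.
Proof. by case: ham => sorted_s _ _; apply: (pathP x0 sorted_s). Qed.

Lemma vertex_index v : vertex (index v (x0 :: p)) = v.
Proof. by apply: nth_index; case: ham. Qed.

Lemma index_le v : index v (x0 :: p) <= size p.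
Proof. by case: ham => _ _ /(_ v); rewrite -index_mem. Qed.

Lemma crossing_chord :
  (forall v x y, x != v -> y != v -> connect (del_vertex e v) x y) ->
  forall b, 0 < b < size p -> exists a v, [/\ a < b, b < v, v <= size p & A a v].
Proof.
move=> cut b /andP[b_gt0 lt_bN].
have index_vertex i : i <= size p -> index (vertex i) (x0 :: p) = i.
  by case: ham => _ uniq_s _ le_iN; apply: index_uniq.
have avoid_b i : i <= size p -> i != b -> vertex i != vertex b.
  by case: ham => _ uniq_s _ le_iN; rewrite nth_uniq //=; lia.
have /connectP[q q_path q_last] := cut (vertex b) (vertex 0) (vertex (size p))
  (avoid_b 0 isT (negbT (ltn_eqF b_gt0))) (avoid_b _ (leqnn _) (negbT (gtn_eqF lt_bN))).
have [y [z [/and3P[yz _ _] lt_yb lt_bz]]] :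
    exists y z, [/\ del_vertex e (vertex b) y z, index y (x0 :: p) < b & b < index z (x0 :: p)].
  apply: (path_jumps_over (h := fun v => index v (x0 :: p)) q_path).
  - by rewrite index_vertex.
  - by rewrite -q_last index_vertex.
  - by move=> y z /and3P[_ _]; apply: contra => /eqP <-; rewrite vertex_index.
by exists (index y (x0 :: p)), (index z (x0 :: p)); rewrite /= !vertex_index index_le.
Qed.

Lemma index_tour_tsp P : index_tour (size p) A P -> tsp_tour e (vertex 0) (map vertex P).
Proof.
case=> P_path P_last P_cover; split; first by rewrite path_map.
  by rewrite last_map P_last.
by move=> v; rewrite -(vertex_index v) -map_cons map_f ?P_cover ?index_le.
Qed.

End HamiltonianIndexing.

Theorem theorem2 (T : finType) (e : rel T) :
  simple_graph e -> two_vertex_connected e ->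
  (exists s : seq T, hamiltonian_path e s) ->
  exists (x : T) (p : seq T), tsp_tour e x p /\ 3 * tour_length x p <= 4 * #|T|.
Proof.
move=> [e_sym _] [T_gt2 [_ cut]] [[|x0 p] ham]; have card_s := card_hamiltonian ham.
  by rewrite card_s in T_gt2.
have N_gt1 : 1 < size p by rewrite card_s in T_gt2.
have [P [P_tour P_short]] := short_index_tour (index_rel_sym x0 p e_sym)
  (index_rel_succ ham) N_gt1 (crossing_chord ham cut).
exists (nth x0 (x0 :: p) 0), (map (nth x0 (x0 :: p)) P).
by rewrite /tour_length size_map card_s; split => //; apply: index_tour_tsp.
Qed.
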